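(* Let $\beta\in\mathbb{Z}[\mathrm{i}]$ with $|\beta|>1$ and let $(\beta,D)$ be an integral numeration system. Then every eventually periodic configuration $(a_z)_{z\in\mathbb{Z}[\mathrm{i}]}$ is $(\beta,D)$-automatic.
   Context: A configuration is a map from $\mathbb{Z}[\mathrm{i}]$ to a finite set. For finite $D\subset\mathbb{Z}[\mathrm{i}]$ with $0\in D$, a word $w=w_{n-1}\cdots w_0\in D^*$ has value $[w]_\beta=\sum_{j}w_j\beta^j$; $(\beta,D)$ is an integral numeration system if every Gaussian integer has a unique such expansion (up to leading zeros). A configuration is $(\beta,D)$-automatic if there is a deterministic finite automaton with output $(S,D,\delta,s_0,A,\tau)$ (transition map extended to words by $\delta(s,wa)=\delta(\delta(s,w),a)$) with $a_z=\tau(\delta(s_0,w))$ for every $w\in D^*$ with $[w]_\beta=z$. A configuration is eventually periodic if there exist $\mathbb{Z}$-linearly independent $p,q\in\mathbb{Z}[\mathrm{i}]$ and a finite set $F$ with $a_z=a_{z+p}=a_{z+q}$ for all $z\in\mathbb{Z}[\mathrm{i}]\setminus F$. *)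

From mathcomp Require Import all_boot all_order all_algebra.
Set Implicit Arguments. Unset Strict Implicit. Unset Printing Implicit Defensive.
Import Order.TTheory GRing.Theory Num.Theory.
Local Open Scope ring_scope.

(** Gaussian integers: (x, y) represents x + y i. *)
Definition gint : Type := (int * int)%type.

Definition gzero : gint := (0, 0).
Definition gadd (z w : gint) : gint := (z.1 + w.1, z.2 + w.2).
Definition gmul (z w : gint) : gint :=
  (z.1 * w.1 - z.2 * w.2, z.1 * w.2 + z.2 * w.1).
Definition gscale (m : int) (z : gint) : gint := (m * z.1, m * z.2).
Definition gnorm2 (z : gint) : int := z.1 ^+ 2 + z.2 ^+ 2.

(** Words w = w_{n-1} ... w_0 are represented as sequences in reading
    order [:: w_{n-1}; ...; w_0].  [val_le] evaluates a little-endian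
    digit list [:: w_0; w_1; ...] as sum_j w_j beta^j. *)
Fixpoint val_le (beta : gint) (ds : seq gint) : gint :=
  match ds with
  | [::] => gzero
  | d :: ds' => gadd d (gmul beta (val_le beta ds'))
  end.

Definition word_value (beta : gint) (w : seq gint) : gint :=
  val_le beta (rev w).

Definition is_word (D : seq gint) (w : seq gint) : bool := all (fun d => d \in D) w.

Definition strip_lz (w : seq gint) : seq gint :=
  drop (find (fun d => d != gzero) w) w.

Definition integral_numeration (beta : gint) (D : seq gint) : Prop :=
  gzero \in D /\
  (forall z : gint, exists w, is_word D w /\ word_value beta w = z) /\
  (forall w1 w2, is_word D w1 -> is_word D w2 ->
     word_value beta w1 = word_value beta w2 -> strip_lz w1 = strip_lz w2).

(** (beta, D)-automatic configurations: there is a DFA with output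
    (S, D, delta, s0, A, tau) reading words most-significant digit first
    (delta(s, w a) = delta(delta(s, w), a)).  The transition function is
    given on all of gint, only its values on D matter. *)
Definition automatic (beta : gint) (D : seq gint) (A : finType)
    (a : gint -> A) : Prop :=
  exists (S : finType) (delta : S -> gint -> S) (s0 : S) (tau : S -> A),
    forall w, is_word D w -> a (word_value beta w) = tau (foldl delta s0 w).

Definition Zlin_indep (p q : gint) : Prop :=
  forall m n : int, gadd (gscale m p) (gscale n q) = gzero -> m = 0 /\ n = 0.

Definition eventually_periodic (A : finType) (a : gint -> A) : Prop :=
  exists (p q : gint) (F : seq gint), Zlin_indep p q /\
    forall z, z \notin F -> a z = a (gadd z p) /\ a z = a (gadd z q).

(* An eventually periodic configuration is, outside a large square, periodic
   along both coordinate axes with some period N: the eventual periods form a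
   subgroup of Z[i]; it contains the independent p and q, hence N Z[i] for
   N = |det(p, q)|.  The automaton keeps the current value v modulo m Z[i],
   for a multiple m of N, together with the bit [|v|^2 <= R].  For R large
   compared with the digits, |v|^2 > R implies |d + beta v|^2 > R, so this
   finite datum is preserved by the step v |-> d + beta v; it determines v
   exactly when v is small (m > 2R), and determines a_v when v is large. *)
From mathcomp Require Import all_boot all_order all_algebra zify ring lra.
From Stdlib Require ClassicalEpsilon.
Import Order.TTheory GRing.Theory Num.Theory.
Set Implicit Arguments. Unset Strict Implicit.
Local Open Scope ring_scope.

Ltac gint_ring :=
  rewrite /gadd /gscale /gmul /gzero; apply: injective_projections => /=; ring.

Lemma gaddA_scale u v (m n : int) :
  gadd (gadd u (gscale m v)) (gscale n v) = gadd u (gscale (m + n) v).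
Proof. gint_ring. Qed.

Lemma gnorm2_ge0 z : 0 <= gnorm2 z.
Proof. by rewrite addr_ge0 ?sqr_ge0. Qed.

Lemma gnorm2M z w : gnorm2 (gmul z w) = gnorm2 z * gnorm2 w.
Proof. rewrite /gnorm2 /gmul /=; ring. Qed.

Definition outside (c : int) (u : gint) : Prop := c < `|u.1| \/ c < `|u.2|.

Definition seq_bound (T : eqType) (r : seq T) (F : T -> int) : int :=
  (\max_(x <- r) absz (F x))%:Z.

Lemma seq_bound_ge (T : eqType) (r : seq T) (F : T -> int) x :
  x \in r -> F x <= seq_bound r F.
Proof.
move=> xr; have := @leq_bigmax_seq _ r (fun=> true) (fun y => absz (F y)) x xr isT.
by rewrite /seq_bound; move: (\max_(_ <- _) _) => M; lia.
Qed.

Definition coord_bound (F : seq gint) : int := seq_bound F (fun z => `|z.1| + `|z.2|).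

Lemma notin_outside_coord_bound F u : outside (coord_bound F) u -> u \notin F.
Proof.
move=> out; apply/negP => /(seq_bound_ge (fun z : gint => `|z.1| + `|z.2|)).
by rewrite -/(coord_bound F); move: out; rewrite /outside; lia.
Qed.

Lemma outside_gnorm2 c u : 2 * (c * c) < gnorm2 u -> outside c u.
Proof.
rewrite /outside /gnorm2 !expr2; case: u => x y /= h.
case: (lerP `|x| c) => hx; last by left.
case: (lerP `|y| c) => hy; last by right.
nia.
Qed.

Definition gdet (p q : gint) : int := p.1 * q.2 - p.2 * q.1.

Lemma Zlin_indep_det p q : Zlin_indep p q -> gdet p q != 0.
Proof.
move=> ind; apply/eqP; rewrite /gdet => det0.
have [q2 p2] : q.2 = 0 /\ - p.2 = 0.
  by apply: ind; apply: injective_projections => /=; nia.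
have [q1 p1] : - q.1 = 0 /\ p.1 = 0.
  by apply: ind; apply: injective_projections => /=; nia.
have [one0 _] : 1 = 0 :> int /\ 0 = 0 :> int.
  by apply: ind; apply: injective_projections => /=; nia.
by move: one0; lia.
Qed.

Definition congruent_mod (m : int) (u v : gint) : Prop :=
  exists k : gint, v = gadd u (gscale m k).

Section EventualPeriods.
Variables (A : finType) (a : gint -> A).

Definition periodic_off (c : int) (v : gint) : Prop :=
  forall u, outside c u -> a u = a (gadd u v).

Definition eventual_period (v : gint) : Prop := exists c, periodic_off c v.

Lemma periodic_off_mono c c' v : c <= c' -> periodic_off c v -> periodic_off c' v.
Proof. by move=> le_cc' Hv u out; apply: Hv; move: out; rewrite /outside; lia. Qed.

Lemma periodic_off_segment c v u (k : nat) : periodic_off c v ->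
  (forall j : nat, (j < k)%N -> outside c (gadd u (gscale j%:Z v))) ->
  a u = a (gadd u (gscale k%:Z v)).
Proof.
move=> Hv; elim: k => [|k IH] seg.
  by congr a; gint_ring.
rewrite IH => [|j lt_jk]; last by apply: seg; lia.
rewrite Hv; last exact: seg.
by congr a; rewrite -addn1 PoszD; gint_ring.
Qed.

Lemma periodic_off_line c v u (m : int) : periodic_off c v ->
  (forall j : int, `|j| <= `|m| -> outside c (gadd u (gscale j v))) ->
  a u = a (gadd u (gscale m v)).
Proof.
move=> Hv; case: m => k seg.
  by apply: (periodic_off_segment Hv) => j lt_jk; apply: seg; lia.
rewrite [RHS](periodic_off_segment (k := k.+1) Hv) => [|j lt_jk].
  by congr a; rewrite gaddA_scale NegzE; gint_ring.
by rewrite gaddA_scale; apply: seg; lia.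
Qed.

Lemma periodic_offZ c v (m : int) : periodic_off c v ->
  periodic_off (c + `|m| * (`|v.1| + `|v.2|)) (gscale m v).
Proof.
move=> Hv u out; rewrite (periodic_off_line (m := m) Hv) => [|j le_jm].
  by congr a; gint_ring.
have le_j1 : `|j * v.1| <= `|m| * (`|v.1| + `|v.2|).
  by rewrite normrM ler_pM //; lia.
have le_j2 : `|j * v.2| <= `|m| * (`|v.1| + `|v.2|).
  by rewrite normrM ler_pM //; lia.
by move: out le_j1 le_j2; rewrite /outside /=; lia.
Qed.

Lemma periodic_offD c v w : periodic_off c v -> periodic_off c w ->
  periodic_off (c + `|v.1| + `|v.2|) (gadd v w).
Proof.
move=> Hv Hw u out; rewrite Hv; last by move: out; rewrite /outside; lia.
rewrite Hw; last by move: out; rewrite /outside /=; lia.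
by congr a; gint_ring.
Qed.

Lemma eventual_periodZ v (m : int) : eventual_period v -> eventual_period (gscale m v).
Proof. by case=> c Hv; exists (c + `|m| * (`|v.1| + `|v.2|)); apply: periodic_offZ. Qed.

Lemma eventual_periodD v w :
  eventual_period v -> eventual_period w -> eventual_period (gadd v w).
Proof.
case=> c1 Hv [c2 Hw]; exists (`|c1| + `|c2| + `|v.1| + `|v.2|).
by apply: periodic_offD; [apply: periodic_off_mono Hv | apply: periodic_off_mono Hw]; lia.
Qed.

Section AxisPeriods.
Variables (c N : int).
Hypotheses (HN1 : periodic_off c (N, 0)) (HN2 : periodic_off c (0, N)).

Lemma periodic_off_horizontal x y (k : int) : c < `|y| -> a (x, y) = a (x + k * N, y).
Proof.
move=> hy; rewrite (periodic_off_line (u := (x, y)) (m := k) HN1).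
  by congr a; gint_ring.
by move=> j _; right; rewrite /= mulr0 addr0.
Qed.

Lemma periodic_off_vertical x y (l : int) : c < `|x| -> a (x, y) = a (x, y + l * N).
Proof.
move=> hx; rewrite (periodic_off_line (u := (x, y)) (m := l) HN2).
  by congr a; gint_ring.
by move=> j _; left; rewrite /= mulr0 addr0.
Qed.

Lemma periodic_off_axes_route z (k l : int) : outside c z ->
  c < z.1 + k * N -> c < z.2 + l * N -> a z = a (z.1 + k * N, z.2 + l * N).
Proof.
case: z => x y [hx|hy] /= hX hY.
  by rewrite (periodic_off_vertical y l hx) (periodic_off_horizontal x k) //; lia.
by rewrite (periodic_off_horizontal x k hy) (periodic_off_vertical _ l) //; lia.
Qed.

(* Move vertically then horizontally (or conversely) without entering the
   square, so that both points reach the same point beyond its corner. *)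
Lemma periodic_off_axes_congr u v : 0 < N ->
  outside c u -> outside c v -> congruent_mod N u v -> a u = a v.
Proof.
move=> N_gt0 out_u out_v [k def_v].
pose K1 := `|c| + `|u.1| + 1; pose K2 := `|c| + `|u.2| + 1.
have le_K1 : K1 <= K1 * N by rewrite /K1; nia.
have le_K2 : K2 <= K2 * N by rewrite /K2; nia.
rewrite (periodic_off_axes_route (k := K1) (l := K2) out_u); try lia.
rewrite (periodic_off_axes_route (k := K1 - k.1) (l := K2 - k.2) out_v);
  rewrite def_v /gadd /gscale /=; try lia.
by congr (a (_, _)); ring.
Qed.

End AxisPeriods.

Lemma eventual_period_axes p q : Zlin_indep p q ->
  eventual_period p -> eventual_period q ->
  eventual_period (`|gdet p q|, 0) /\ eventual_period (0, `|gdet p q|).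
Proof.
move=> ind ev_p ev_q; pose s := Num.sg (gdet p q).
have combine (m n : int) : eventual_period (gadd (gscale m p) (gscale n q)).
  by apply: eventual_periodD; apply: eventual_periodZ.
split.
  have -> : (`|gdet p q|, 0) = gadd (gscale (s * q.2) p) (gscale (- (s * p.2)) q).
    by rewrite normrEsg /gdet; gint_ring.
  exact: combine.
have -> : (0, `|gdet p q|) = gadd (gscale (- (s * q.1)) p) (gscale (s * p.1) q).
  by rewrite normrEsg /gdet; gint_ring.
exact: combine.
Qed.

Lemma eventually_periodic_congr : eventually_periodic a ->
  exists c N, 0 < N /\
    forall u v, outside c u -> outside c v -> congruent_mod N u v -> a u = a v.
Proof.
case=> p [q [F [ind per]]].
have ev_p : eventual_period p.
  by exists (coord_bound F) => u /notin_outside_coord_bound /per [].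
have ev_q : eventual_period q.
  by exists (coord_bound F) => u /notin_outside_coord_bound /per [].
have [[c1 H1] [c2 H2]] := eventual_period_axes ind ev_p ev_q.
exists (`|c1| + `|c2|), `|gdet p q|.
have N_gt0 : 0 < `|gdet p q| by rewrite normr_gt0 Zlin_indep_det.
split=> // u v; apply: periodic_off_axes_congr => //.
  by apply: periodic_off_mono H1; lia.
by apply: periodic_off_mono H2; lia.
Qed.

End EventualPeriods.

Definition residue (m x : int) : 'I_(absz m).+1 := inord (absz (x %% m)%Z).

Lemma residue_eq m x y : 0 < m ->
  residue m x = residue m y <-> exists k, y = x + k * m.
Proof.
move=> m_gt0; have m_neq0 : m != 0 by lia.
have mod_lt z : (absz (z %% m)%Z < (absz m).+1)%N.
  by have := ltz_pmod z m_gt0; have := modz_ge0 z m_neq0; lia.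
split=> [/(congr1 val) /=|[k ->]]; last by rewrite /residue addrC modzMDl.
rewrite !inordK // => eq_mod; exists ((y %/ m)%Z - (x %/ m)%Z).
have := modz_ge0 x m_neq0; have := modz_ge0 y m_neq0.
by have := divz_eq x m; have := divz_eq y m; rewrite mulrBl; lia.
Qed.

Definition gresidue (m : int) (v : gint) := (residue m v.1, residue m v.2).

Lemma gresidue_eq m u v : 0 < m ->
  gresidue m u = gresidue m v <-> congruent_mod m u v.
Proof.
move=> m_gt0; split=> [[/residue_eq-/(_ m_gt0) [k1 e1] /residue_eq-/(_ m_gt0) [k2 e2]]|].
  by exists (k1, k2); apply: injective_projections; rewrite /= ?e1 ?e2 mulrC.
case=> k ->; congr pair; apply/residue_eq => //.
  by exists k.1; rewrite /= mulrC.
by exists k.2; rewrite /= mulrC.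
Qed.

Lemma congruent_mod_affine m d b u v : congruent_mod m u v ->
  congruent_mod m (gadd d (gmul b u)) (gadd d (gmul b v)).
Proof. by case=> k ->; exists (gmul b k); gint_ring. Qed.

Lemma congruent_mod_mulr m n u v : congruent_mod (m * n) u v -> congruent_mod m u v.
Proof. by case=> k ->; exists (gscale n k); gint_ring. Qed.

Lemma gnorm2_le_coord z (R : int) : gnorm2 z <= R -> `|z.1| <= R /\ `|z.2| <= R.
Proof. by case: z => x y; rewrite /gnorm2 /= !expr2 => h; nia. Qed.

Lemma congruent_mod_small m R u v : 2 * R < m ->
  gnorm2 u <= R -> gnorm2 v <= R -> congruent_mod m u v -> u = v.
Proof.
move=> lt_Rm /gnorm2_le_coord [u1 u2] /gnorm2_le_coord [v1 v2] [k def_v].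
move: v1 v2; rewrite def_v /= => v1 v2.
have [k1 k2] : k.1 = 0 /\ k.2 = 0 by nia.
by rewrite /gadd /gscale k1 k2 !mulr0 !addr0; case: (u).
Qed.

Lemma gnorm2_add_lb d w : 3 * gnorm2 w - 12 * gnorm2 d <= 4 * gnorm2 (gadd d w).
Proof.
rewrite -subr_ge0.
have -> : 4 * gnorm2 (gadd d w) - (3 * gnorm2 w - 12 * gnorm2 d) =
    gnorm2 (w.1 + 4 * d.1, w.2 + 4 * d.2) by rewrite /gnorm2 /=; ring.
exact: gnorm2_ge0.
Qed.

Lemma gnorm2_affine_gt b d v (R : int) : 1 < gnorm2 b -> 6 * gnorm2 d <= R ->
  R < gnorm2 v -> R < gnorm2 (gadd d (gmul b v)).
Proof.
(* 4 |d + b v|^2 >= 3 |b|^2 |v|^2 - 12 |d|^2 > 6 R - 2 R *)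
move=> b_gt1 d_le R_lt; have := gnorm2_add_lb d (gmul b v); rewrite gnorm2M.
have := gnorm2_ge0 d; nia.
Qed.

Definition mod_state (m R : int) (v : gint) := (gresidue m v, gnorm2 v <= R).

Lemma mod_state_eq m R u v : 0 <= R -> 2 * R < m ->
  mod_state m R u = mod_state m R v ->
  u = v \/ [/\ R < gnorm2 u, R < gnorm2 v & congruent_mod m u v].
Proof.
move=> R_ge0 lt_Rm eq_state.
move: (congr1 fst eq_state) (congr1 snd eq_state) => /= res_eq small_eq.
have m_gt0 : 0 < m by lia.
have uv := (gresidue_eq u v m_gt0).1 res_eq.
case: (leP (gnorm2 u) R) small_eq => [u_le /esym v_le | u_gt /esym /negbT].
  by left; apply: congruent_mod_small lt_Rm u_le v_le uv.
by rewrite -ltNge => v_gt; right; split; last exact: uv.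
Qed.

Lemma mod_state_affine m R b d u v :
  1 < gnorm2 b -> 0 <= R -> 6 * gnorm2 d <= R -> 2 * R < m ->
  mod_state m R u = mod_state m R v ->
  mod_state m R (gadd d (gmul b u)) = mod_state m R (gadd d (gmul b v)).
Proof.
move=> b_gt1 R_ge0 d_le lt_Rm.
case/mod_state_eq=> // [-> // | [u_gt v_gt uv]].
have m_gt0 : 0 < m by lia.
congr pair; first exact/gresidue_eq/congruent_mod_affine.
by rewrite !leNgt !gnorm2_affine_gt.
Qed.

(* Choice picks a representative value for each state, so the transitions
   need not be computed explicitly. *)
Lemma automatic_of_congruence beta D (A S : finType) (a : gint -> A)
    (f : gint -> S) :
  (forall u v, f u = f v -> a u = a v) ->
  (forall d u v, d \in D -> f u = f v ->
     f (gadd d (gmul beta u)) = f (gadd d (gmul beta v))) ->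
  automatic beta D a.
Proof.
move=> f_out f_step.
pose g s := ClassicalEpsilon.epsilon (inhabits gzero) (fun v => f v = s).
have fgK v : f (g (f v)) = f v.
  apply: (ClassicalEpsilon.epsilon_spec (inhabits gzero) (fun u => f u = f v)).
  by exists v.
pose delta s d := f (gadd d (gmul beta (g s))).
have run w : is_word D w -> foldl delta (f gzero) w = f (word_value beta w).
  elim/last_ind: w => [//|w d IH]; rewrite /is_word all_rcons => /andP [dD wD].
  rewrite foldl_rcons IH // /word_value rev_rcons /=.
  exact: f_step dD (fgK _).
exists S, delta, (f gzero), (fun s => a (g s)) => w wD.
by rewrite run //; apply: f_out; rewrite fgK.
Qed.

Theorem lemma5p1 (beta : gint) (D : seq gint) :
  1 < gnorm2 beta -> integral_numeration beta D ->
  forall (A : finType) (a : gint -> A),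
    eventually_periodic a -> automatic beta D a.
Proof.
move=> beta_gt1 _ A a /eventually_periodic_congr [c [N [N_gt0 a_congr]]].
pose R := 2 * (c * c) + 6 * seq_bound D gnorm2.
have bound_ge0 : 0 <= seq_bound D gnorm2 by rewrite /seq_bound.
have R_ge0 : 0 <= R by rewrite /R; nia.
pose m := N * (2 * R + 1).
have lt_Rm : 2 * R < m by rewrite /m; nia.
apply: (automatic_of_congruence (f := mod_state m R)) => [u v | d u v dD].
  case/mod_state_eq=> // [-> // | [u_gt v_gt /congruent_mod_mulr uv]].
  by apply: a_congr uv; apply: outside_gnorm2; rewrite /R in u_gt v_gt; lia.
apply: mod_state_affine => //.
by have := seq_bound_ge gnorm2 dD; have := gnorm2_ge0 d; rewrite /R; nia.
Qed.
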